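(* For every $\theta\in[0,\pi)$, $\overline Q^{\,\theta}_S$ has a unique minimiser on $\mathbb{R}^2$, namely $$(\alpha^S_\theta,\beta^S_\theta)=\Big(-\frac k2(1+\cos2\theta),\ \frac k2\sin2\theta\Big),$$ and $\min_{\mathbb{R}^2}\overline Q^{\,\theta}_S=\bar e_S$.
   Context: Fix constants $c_1>0$, $c_2>0$, $c:=c_1+c_2$, $k>0$, $\bar e_S\ge0$, $\theta\in[0,\pi)$. Let $\bar A^\theta_S:=k\begin{pmatrix}-\cos^2\theta&\sin\theta\cos\theta\\ \sin\theta\cos\theta&-\sin^2\theta\end{pmatrix}$. For matrices $M\cdot N={\rm tr}(M^{\rm T}N)$, $|M|^2=M\cdot M$. For $M\in\mathbb{R}^{2\times2}_{\rm sym}$, $L^\theta_S(M):=-2c_1M\cdot\bar A^\theta_S+2c_2k\,{\rm tr}M+ck^2+\bar e_S$. For $(\alpha,\beta)\in\mathbb{R}^2$, $$\overline Q^{\,\theta}_S(\alpha,\beta):=\min_{\gamma\in\mathbb{R}}\Big\{c|M|^2+2c|\det M|+L^\theta_S(M): M=\begin{pmatrix}\alpha&\beta\\ \beta&\gamma\end{pmatrix}\Big\}.$$ *)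

From Stdlib Require Import Reals ClassicalEpsilon.
Open Scope R_scope.

(* A symmetric 2x2 matrix M = [[m11, m12],[m12, m22]] is represented by its
   three entries.  Abar^theta_S = k [[-cos^2, sin cos],[sin cos, -sin^2]]. *)
Definition Abar11 (k th : R) : R := k * (- (cos th)^2).
Definition Abar12 (k th : R) : R := k * (sin th * cos th).
Definition Abar22 (k th : R) : R := k * (- (sin th)^2).

(* M . N = tr(M^T N), for M = [[a,b],[b,g]] and N symmetric with entries n11 n12 n22 *)
Definition dot2 (a b g n11 n12 n22 : R) : R := a * n11 + b * n12 + b * n12 + g * n22.
Definition fnorm2 (a b g : R) : R := dot2 a b g a b g.
Definition det2 (a b g : R) : R := a * g - b * b.
Definition tr2 (a g : R) : R := a + g.

Definition LS (c1 c2 k eS th a b g : R) : R :=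
  - 2 * c1 * dot2 a b g (Abar11 k th) (Abar12 k th) (Abar22 k th)
  + 2 * c2 * k * tr2 a g + (c1 + c2) * k ^ 2 + eS.

Definition FS (c1 c2 k eS th a b g : R) : R :=
  (c1 + c2) * fnorm2 a b g + 2 * (c1 + c2) * Rabs (det2 a b g)
  + LS c1 c2 k eS th a b g.

Definition is_min_R (f : R -> R) (m : R) : Prop :=
  (exists g, f g = m) /\ (forall g, m <= f g).

(* Qbar^theta_S(alpha,beta) := min over gamma of FS.  Defined by choice as the
   (unique) minimum value; if no minimum existed the value would be unspecified. *)
Definition Qbar (c1 c2 k eS th a b : R) : R :=
  epsilon (inhabits 0) (fun m => is_min_R (FS c1 c2 k eS th a b) m).

(** Write [M] for the symmetric matrix with entries [a b g], [t = tr M], and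
    let [N = sqrt (|M|^2 + 2 |det M|)] be its nuclear norm.  Expanding with
    [C = cos 2θ], [S = sin 2θ], the objective becomes
    [eS + c N^2 + (c1 + 2 c2) k t - c1 k w + c k^2] with
    [w = (g - a) C + 2 b S], and since [|t| <= N] and [|w| <= N]
    (Cauchy–Schwarz against the unit vector [(C, S)]) this is the sum of squares
    [eS + c (N - k)^2 + (c1 + 2 c2) k (t + N) + c1 k (N - w)].  Hence the
    objective is at least [eS], with equality only if [N = k], [t = -k] and
    [(g - a, 2 b) = k (C, S)], which pins down [(a, b)].  Existence of the
    minimum over [g] follows from continuity and coercivity. *)

From Stdlib Require Import Reals Lra Psatz ClassicalEpsilon.
Open Scope R_scope.

Lemma continuity_coercive_min (f : R -> R) (r : R) :
  continuity f -> (forall g, r <= Rabs g -> f 0 <= f g) -> exists m, is_min_R f m.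
Proof.
  intros Hf Hr.
  destruct (Rle_or_lt 0 r) as [r_ge0 | r_lt0].
  2: { exists (f 0); split; [now exists 0 |].
       intro g; apply Hr; pose proof (Rabs_pos g); lra. }
  destruct (continuity_ab_min f (- r) r) as [x [Hmin _]]; [lra | intros; apply Hf |].
  exists (f x); split; [now exists x |].
  intro g; destruct (Rle_or_lt r (Rabs g)) as [Hg | Hg].
  - apply Rle_trans with (f 0); [apply Hmin; lra | now apply Hr].
  - apply Hmin; apply Rabs_def2 in Hg; lra.
Qed.

Lemma dot_le_of_unit (x y p q m : R) :
  p ^ 2 + q ^ 2 = 1 -> 0 <= m -> x ^ 2 + y ^ 2 <= m ^ 2 -> x * p + y * q <= m.
Proof.
  intros Hpq Hm Hxy.
  assert (CS : (x * p + y * q) ^ 2 <= m ^ 2).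
  { assert (Lagrange : (x ^ 2 + y ^ 2) * (p ^ 2 + q ^ 2) - (x * p + y * q) ^ 2
                       = (x * q - y * p) ^ 2) by ring.
    rewrite Hpq in Lagrange; pose proof (pow2_ge_0 (x * q - y * p)); lra. }
  nra.
Qed.

Lemma dot_eq_of_unit (x y p q r : R) :
  p ^ 2 + q ^ 2 = 1 -> x ^ 2 + y ^ 2 <= r ^ 2 -> x * p + y * q = r ->
  x = r * p /\ y = r * q.
Proof.
  intros Hpq Hxy Hdot.
  assert (Hsq : (x - r * p) ^ 2 + (y - r * q) ^ 2 <= 0).
  { replace ((x - r * p) ^ 2 + (y - r * q) ^ 2)
      with (x ^ 2 + y ^ 2 - 2 * r * (x * p + y * q) + r ^ 2 * (p ^ 2 + q ^ 2))
      by ring.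
    rewrite Hdot, Hpq; lra. }
  pose proof (pow2_ge_0 (x - r * p)); pose proof (pow2_ge_0 (y - r * q)).
  split; apply Rminus_diag_uniq, Rsqr_0_uniq; rewrite Rsqr_pow2; lra.
Qed.

Definition nuc2 (a b g : R) : R := fnorm2 a b g + 2 * Rabs (det2 a b g).

Lemma nuc2_ge_tr2 (a b g : R) : tr2 a g ^ 2 <= nuc2 a b g.
Proof.
  unfold nuc2, fnorm2, dot2, det2, tr2.
  pose proof (Rle_abs (a * g - b * b)); nra.
Qed.

Lemma nuc2_ge_dev (a b g : R) : (g - a) ^ 2 + (2 * b) ^ 2 <= nuc2 a b g.
Proof.
  unfold nuc2, fnorm2, dot2, det2.
  pose proof (Rle_abs (- (a * g - b * b))); rewrite Rabs_Ropp in *; nra.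
Qed.

Definition nuc (a b g : R) : R := sqrt (nuc2 a b g).

Lemma nuc_pow2 (a b g : R) : nuc a b g ^ 2 = nuc2 a b g.
Proof.
  unfold nuc; rewrite <- Rsqr_pow2; apply Rsqr_sqrt.
  pose proof (nuc2_ge_tr2 a b g); nra.
Qed.

Lemma cos2_sin2_2a (th : R) : cos (2 * th) ^ 2 + sin (2 * th) ^ 2 = 1.
Proof. pose proof (sin2_cos2 (2 * th)); unfold Rsqr in *; lra. Qed.

Section Objective.

Variables (c1 c2 k eS th : R).

Let c := c1 + c2.
Let C := cos (2 * th).
Let S := sin (2 * th).

Lemma FS_expand (a b g : R) :
  FS c1 c2 k eS th a b g =
  eS + c * nuc2 a b g + (c1 + 2 * c2) * k * tr2 a g
  - c1 * k * ((g - a) * C + 2 * b * S) + c * k ^ 2.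
Proof.
  unfold FS, LS, nuc2, dot2, tr2, Abar11, Abar12, Abar22, c, C, S.
  rewrite cos_2a_cos, sin_2a.
  assert (Hsc : sin th ^ 2 = 1 - cos th ^ 2)
    by (pose proof (sin2_cos2 th); unfold Rsqr in *; lra).
  rewrite Hsc; ring.
Qed.

Lemma FS_sos (a b g : R) :
  FS c1 c2 k eS th a b g - eS =
  c * (nuc a b g - k) ^ 2 + (c1 + 2 * c2) * k * (tr2 a g + nuc a b g)
  + c1 * k * (nuc a b g - ((g - a) * C + 2 * b * S)).
Proof. rewrite FS_expand, <- nuc_pow2; unfold c; ring. Qed.

Lemma nuc_bounds (a b g : R) :
  0 <= tr2 a g + nuc a b g /\ 0 <= nuc a b g - ((g - a) * C + 2 * b * S).
Proof.
  assert (HN0 : 0 <= nuc a b g) by apply sqrt_pos.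
  pose proof (nuc_pow2 a b g); pose proof (nuc2_ge_tr2 a b g).
  split; [nra |].
  pose proof (nuc2_ge_dev a b g).
  enough ((g - a) * C + 2 * b * S <= nuc a b g) by lra.
  apply dot_le_of_unit; [apply cos2_sin2_2a | assumption | lra].
Qed.

(* The witness is [M = Abar^θ_S] itself, a singular matrix. *)
Lemma FS_at_minimiser :
  FS c1 c2 k eS th (- (k / 2) * (1 + C)) ((k / 2) * S) (- (k / 2) * (1 - C)) = eS.
Proof.
  assert (HCS := cos2_sin2_2a th); fold C S in HCS.
  assert (Hnuc : nuc2 (- (k / 2) * (1 + C)) ((k / 2) * S) (- (k / 2) * (1 - C)) = k ^ 2).
  { assert (Hdet : det2 (- (k / 2) * (1 + C)) ((k / 2) * S) (- (k / 2) * (1 - C)) = 0).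
    { unfold det2; transitivity ((k / 2) ^ 2 * (1 - (C ^ 2 + S ^ 2))); [ring |].
      rewrite HCS; ring. }
    unfold nuc2; rewrite Hdet, Rabs_R0; unfold fnorm2, dot2.
    transitivity ((k / 2) ^ 2 * (2 + 2 * (C ^ 2 + S ^ 2))); [ring |].
    rewrite HCS; field. }
  rewrite FS_expand, Hnuc; unfold tr2, c.
  transitivity (eS + c1 * k ^ 2 * (1 - (C ^ 2 + S ^ 2))); [field |].
  rewrite HCS; ring.
Qed.

Hypotheses (c1_gt0 : 0 < c1) (c2_gt0 : 0 < c2) (k_gt0 : 0 < k).

Lemma FS_ge_eS (a b g : R) : eS <= FS c1 c2 k eS th a b g.
Proof.
  pose proof (FS_sos a b g) as Hsos; pose proof (nuc_bounds a b g) as [Ht Hw].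
  set (N := nuc a b g) in *.
  assert (0 <= c * (N - k) ^ 2) by (unfold c; pose proof (pow2_ge_0 (N - k)); nra).
  assert (0 <= (c1 + 2 * c2) * k * (tr2 a g + N))
    by (apply Rmult_le_pos; [apply Rmult_le_pos |]; lra).
  assert (0 <= c1 * k * (N - ((g - a) * C + 2 * b * S)))
    by (apply Rmult_le_pos; [apply Rmult_le_pos |]; lra).
  lra.
Qed.

Lemma FS_eq_eS (a b g : R) :
  FS c1 c2 k eS th a b g = eS -> a = - (k / 2) * (1 + C) /\ b = (k / 2) * S.
Proof.
  intro Heq.
  pose proof (FS_sos a b g) as Hsos; pose proof (nuc_bounds a b g) as [Ht Hw].
  pose proof (nuc_pow2 a b g) as HN2.
  set (N := nuc a b g) in *.
  set (w := (g - a) * C + 2 * b * S) in *.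
  assert (Hc : 0 < c) by (unfold c; lra).
  assert (Hc' : 0 < (c1 + 2 * c2) * k) by nra.
  assert (Hc'' : 0 < c1 * k) by nra.
  pose proof (pow2_ge_0 (N - k)).
  assert (T1 : c * (N - k) ^ 2 = 0) by nra.
  assert (T2 : (c1 + 2 * c2) * k * (tr2 a g + N) = 0) by nra.
  assert (T3 : c1 * k * (N - w) = 0) by nra.
  apply Rmult_integral in T1 as [|T1]; [lra |].
  apply Rmult_integral in T2 as [|T2]; [lra |].
  apply Rmult_integral in T3 as [|T3]; [lra |].
  assert (HNk : N = k) by (apply Rminus_diag_uniq, Rsqr_0_uniq; rewrite Rsqr_pow2; lra).
  assert (Htr : tr2 a g = - k) by lra.
  assert (Hwk : w = k) by lra.
  destruct (dot_eq_of_unit (g - a) (2 * b) C S k (cos2_sin2_2a th))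
    as [Hga Hb]; [pose proof (nuc2_ge_dev a b g); nra | exact Hwk |].
  unfold tr2 in Htr; split; lra.
Qed.

End Objective.

Lemma FS_continuity (c1 c2 k eS th a b : R) : continuity (FS c1 c2 k eS th a b).
Proof.
  unfold FS, LS, fnorm2, dot2, det2, tr2.
  apply continuity_plus; [apply continuity_plus |]; [reg | | reg].
  apply continuity_mult; [now apply continuity_const |].
  apply (continuity_comp (fun g => a * g - b * b) Rabs); [reg | apply Rcontinuity_abs].
Qed.

Lemma quadratic_eventually_ge (c L B G : R) :
  0 < c -> 0 <= L -> 0 <= B -> L / c + 2 * B <= G -> 2 * c * B ^ 2 <= c * G ^ 2 - L * G.
Proof.
  intros Hc HL HB HG.
  assert (Hq : 0 <= L / c) by (apply Rle_mult_inv_pos; lra).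
  assert (HLq : L = c * (L / c)) by (field; lra).
  assert (Hprod : 2 * B * (2 * B) <= G * (G - L / c)) by (apply Rmult_le_compat; lra).
  rewrite HLq; nra.
Qed.

Lemma FS_growth (c1 c2 k eS th a b g : R) :
  0 <= c1 + c2 ->
  (c1 + c2) * Rabs g ^ 2 - Rabs (2 * c1 * k * sin th ^ 2 + 2 * c2 * k) * Rabs g
  - 2 * (c1 + c2) * Rabs b ^ 2 <= FS c1 c2 k eS th a b g - FS c1 c2 k eS th a b 0.
Proof.
  intro c_ge0.
  set (lam := 2 * c1 * k * sin th ^ 2 + 2 * c2 * k).
  assert (Hdiff : FS c1 c2 k eS th a b g - FS c1 c2 k eS th a b 0
                  = (c1 + c2) * g ^ 2 + lam * g
                    + 2 * (c1 + c2) * (Rabs (det2 a b g) - Rabs (det2 a b 0)))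
    by (unfold FS, LS, fnorm2, dot2, det2, tr2, Abar11, Abar12, Abar22, lam; ring).
  assert (Hdet0 : Rabs (det2 a b 0) = Rabs b ^ 2).
  { unfold det2; rewrite RPow_abs, <- Rabs_Ropp; f_equal; ring. }
  assert (Hlin : - (Rabs lam * Rabs g) <= lam * g).
  { rewrite <- Rabs_mult; pose proof (Rle_abs (- (lam * g))); rewrite Rabs_Ropp in *; lra. }
  rewrite Hdiff, Hdet0, RPow_abs, (Rabs_right (g ^ 2)) by (apply Rle_ge, pow2_ge_0).
  assert (0 <= 2 * (c1 + c2) * Rabs (det2 a b g))
    by (apply Rmult_le_pos; [lra | apply Rabs_pos]).
  lra.
Qed.

Lemma FS_coercive (c1 c2 k eS th a b : R) :
  0 < c1 + c2 ->
  exists r, forall g, r <= Rabs g -> FS c1 c2 k eS th a b 0 <= FS c1 c2 k eS th a b g.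
Proof.
  intro c_gt0.
  set (L := Rabs (2 * c1 * k * sin th ^ 2 + 2 * c2 * k)).
  exists (L / (c1 + c2) + 2 * Rabs b); intros g Hg.
  pose proof (FS_growth c1 c2 k eS th a b g (Rlt_le _ _ c_gt0)).
  pose proof (quadratic_eventually_ge (c1 + c2) L (Rabs b) (Rabs g) c_gt0
                (Rabs_pos _) (Rabs_pos b) Hg).
  unfold L in *; lra.
Qed.

Lemma Qbar_spec (c1 c2 k eS th a b : R) :
  0 < c1 + c2 -> is_min_R (FS c1 c2 k eS th a b) (Qbar c1 c2 k eS th a b).
Proof.
  intro c_gt0; unfold Qbar; apply epsilon_spec.
  destruct (FS_coercive c1 c2 k eS th a b c_gt0) as [r Hr].
  exact (continuity_coercive_min _ r (FS_continuity _ _ _ _ _ _ _) Hr).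
Qed.

Theorem lemma4p2 (c1 c2 k eS th : R) :
  0 < c1 -> 0 < c2 -> 0 < k -> 0 <= eS -> 0 <= th < PI ->
  (* the minimum over gamma defining Qbar exists for every (alpha, beta) *)
  (forall a b, is_min_R (FS c1 c2 k eS th a b) (Qbar c1 c2 k eS th a b)) /\
  (* (alpha_theta, beta_theta) is a minimiser with minimum value eS *)
  Qbar c1 c2 k eS th (- (k / 2) * (1 + cos (2 * th))) ((k / 2) * sin (2 * th)) = eS /\
  (forall a b, eS <= Qbar c1 c2 k eS th a b) /\
  (* uniqueness of the minimiser *)
  (forall a b, Qbar c1 c2 k eS th a b = eS ->
     a = - (k / 2) * (1 + cos (2 * th)) /\ b = (k / 2) * sin (2 * th)).
Proof.
  intros c1_gt0 c2_gt0 k_gt0 _ _.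
  assert (Hspec : forall a b, is_min_R (FS c1 c2 k eS th a b) (Qbar c1 c2 k eS th a b))
    by (intros; apply Qbar_spec; lra).
  assert (Hlow : forall a b, eS <= Qbar c1 c2 k eS th a b).
  { intros a b; destruct (Hspec a b) as [[g <-] _]; now apply FS_ge_eS. }
  split; [exact Hspec |]; split; [| split; [exact Hlow |]].
  - apply Rle_antisym; [| apply Hlow].
    destruct (Hspec (- (k / 2) * (1 + cos (2 * th))) ((k / 2) * sin (2 * th))) as [_ Hmin].
    eapply Rle_trans; [apply Hmin | right; apply FS_at_minimiser].
  - intros a b HQ; destruct (Hspec a b) as [[g Hg] _].
    apply (FS_eq_eS c1 c2 k eS th c1_gt0 c2_gt0 k_gt0 a b g); congruence.
Qed.
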